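(* There does not exist a 5-vertex 3-graph $H$ that is simultaneously $K_4^{3-}$-free, $C_5$-free and $F_{3,2}$-free and has complete shadow graph.
   Context: A 3-graph is a 3-uniform hypergraph. $K_4^{3-}$ has vertex set $[4]$ and edges $123,124,134$; $C_5$ has vertex set $[5]$ and edges $123,234,345,145,125$; $F_{3,2}$ has vertex set $[5]$ and edges $123,145,245,345$. $H$ is $F$-free if it has no (not necessarily induced) subhypergraph isomorphic to $F$. The shadow graph of $H$ is the graph on $V(H)$ in which a pair is an edge iff it is contained in some edge of $H$; it is complete if every pair of vertices is such an edge. *)

From mathcomp Require Import all_boot.
Set Implicit Arguments. Unset Strict Implicit. Unset Printing Implicit Defensive.

Definition is_3graph (T : finType) (E : {set {set T}}) : Prop :=
  forall e, e \in E -> #|e| = 3.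

(* Pattern 3-graphs on vertex set 'I_k (vertex i of the paper is ordinal i-1). *)
Definition tri (k : nat) (a b c : 'I_k) : {set 'I_k} := [set a; b; c].

Definition K43m : {set {set 'I_4}} :=
  [set tri (inord 0) (inord 1) (inord 2); tri (inord 0) (inord 1) (inord 3);
       tri (inord 0) (inord 2) (inord 3)].

Definition C5 : {set {set 'I_5}} :=
  [set tri (inord 0) (inord 1) (inord 2); tri (inord 1) (inord 2) (inord 3);
       tri (inord 2) (inord 3) (inord 4); tri (inord 0) (inord 3) (inord 4);
       tri (inord 0) (inord 1) (inord 4)].

Definition F32 : {set {set 'I_5}} :=
  [set tri (inord 0) (inord 1) (inord 2); tri (inord 0) (inord 3) (inord 4);
       tri (inord 1) (inord 3) (inord 4); tri (inord 2) (inord 3) (inord 4)].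

Definition contains (k : nat) (F : {set {set 'I_k}}) (T : finType)
    (E : {set {set T}}) : Prop :=
  exists f : 'I_k -> T, injective f /\ forall e, e \in F -> f @: e \in E.

Definition free (k : nat) (F : {set {set 'I_k}}) (T : finType)
    (E : {set {set T}}) : Prop := ~ contains F E.

Definition shadow_complete (T : finType) (E : {set {set T}}) : Prop :=
  forall x y : T, x != y -> exists2 e, e \in E & (x \in e) && (y \in e).

From mathcomp Require Import all_boot.

(* Numbering the five vertices by their rank in [enum T] turns a 3-graph into a
   list of increasing index triples, i.e. one of the 2^10 subsequences of the ten
   triples of {0,...,4}.  For each of these whose shadow is complete, evaluation
   exhibits a permutation of {0,...,4} carrying K_4^{3-}, C_5 or F_{3,2} into it,
   and such a permutation transports back to a copy of the pattern in H. *)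

Set Implicit Arguments.
Unset Strict Implicit.
Unset Printing Implicit Defensive.

Fixpoint subseqs (A : Type) (s : seq A) : seq (seq A) :=
  if s is x :: s' then [seq x :: t | t <- subseqs s'] ++ subseqs s' else [:: [::]].

Lemma subseq_in_subseqs (A : eqType) (s t : seq A) : subseq t s -> t \in subseqs s.
Proof.
elim: s t => [|x s IHs] [|y t] //=; rewrite mem_cat.
  by rewrite IHs ?orbT ?sub0seq.
by case: eqP => [-> /IHs /(map_f (cons x)) -> | _ /IHs ->]; rewrite ?orbT.
Qed.

Definition triples (n : nat) : seq (seq nat) :=
  [seq t <- subseqs (iota 0 n) | size t == 3].

Definition shadow_completeb (n : nat) (s : seq (seq nat)) : bool :=
  all (fun a => all (fun b =>
    (a != b) ==> has (fun t => (a \in t) && (b \in t)) s) (iota 0 n)) (iota 0 n).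

(* The edges listed in [s] are meant to be increasing, hence the [sort]. *)
Definition embeds (n : nat) (L : seq (nat * nat * nat)) (s : seq (seq nat)) : bool :=
  has (fun p => all (fun t =>
    sort leq [:: nth 0 p t.1.1; nth 0 p t.1.2; nth 0 p t.2] \in s) L)
  (permutations (iota 0 n)).

Section VertexNumbering.

Variables (T : finType) (x0 : T) (n : nat).
Hypothesis card_T : #|T| = n.

Definition vertex (i : nat) : T := nth x0 (enum T) i.

Definition vertex_set (t : seq nat) : {set T} := [set:: map vertex t].

Definition indices (e : {set T}) : seq nat := [seq i <- iota 0 n | vertex i \in e].

Definition index_graph (E : {set {set T}}) : seq (seq nat) :=
  [seq t <- triples n | vertex_set t \in E].

Lemma vertex_eq i j : i < n -> j < n -> (vertex i == vertex j) = (i == j).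
Proof. by rewrite -card_T cardE => ? ?; rewrite nth_uniq ?enum_uniq. Qed.

Lemma vertex_set_indices e : vertex_set (indices e) = e.
Proof.
apply/setP => x; rewrite inE; apply/mapP/idP => [[i] | xe].
  by rewrite mem_filter => /andP[ie _] ->.
have xT : x \in enum T by rewrite mem_enum.
exists (index x (enum T)); last by rewrite /vertex nth_index.
by rewrite mem_filter mem_iota /vertex nth_index // xe -card_T cardE index_mem.
Qed.

Lemma size_indices e : size (indices e) = #|e|.
Proof.
rewrite -{2}(vertex_set_indices e) cardsE (card_uniqP _) ?size_map //.
rewrite map_inj_in_uniq ?filter_uniq ?iota_uniq // => i j.
rewrite !mem_filter !mem_iota => /andP[_ /= iT] /andP[_ /= jT] /eqP.
by rewrite vertex_eq // => /eqP.
Qed.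

Lemma vertex_set_perm t t' : perm_eq t t' -> vertex_set t = vertex_set t'.
Proof. by move=> /(perm_map vertex) /perm_mem tt'; apply/setP => x; rewrite !inE tt'. Qed.

Lemma indices_in_triples (e : {set T}) : #|e| = 3 -> indices e \in triples n.
Proof. by rewrite mem_filter size_indices => ->; rewrite subseq_in_subseqs ?filter_subseq. Qed.

Lemma index_graph_in_subseqs E : index_graph E \in subseqs (triples n).
Proof. exact/subseq_in_subseqs/filter_subseq. Qed.

Lemma shadow_completeb_index_graph E :
  is_3graph E -> shadow_complete E -> shadow_completeb n (index_graph E).
Proof.
move=> E3 shE; apply/allP => a; rewrite mem_iota => /= an.
apply/allP => b; rewrite mem_iota => /= bn; apply/implyP => ab.
have [e eE /andP[ae be]] : exists2 e, e \in E & (vertex a \in e) && (vertex b \in e).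
  by apply: shE; rewrite vertex_eq.
apply/hasP; exists (indices e).
  by rewrite mem_filter vertex_set_indices eE indices_in_triples ?E3.
by rewrite !mem_filter !mem_iota ae be an bn.
Qed.

Lemma contains_of_embeds k (F : {set {set 'I_k.+1}}) L E :
  k < n -> all (fun t => [&& t.1.1 <= k, t.1.2 <= k & t.2 <= k]) L ->
  {subset F <= [seq tri (inord t.1.1) (inord t.1.2) (inord t.2) | t <- L]} ->
  embeds n L (index_graph E) -> contains F E.
Proof.
move=> kn /allP Lk FL /hasP[p]; rewrite mem_permutations => pP /allP Lp.
have p_size : size p = n by rewrite (perm_size pP) size_iota.
have p_uniq : uniq p by rewrite (perm_uniq pP) iota_uniq.
have p_lt (i : 'I_k.+1) : nth 0 p i < n.
  have : nth 0 p i \in iota 0 n by rewrite -(perm_mem pP) mem_nth ?p_size ?(leq_trans _ kn).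
  by rewrite mem_iota.
exists (fun i => vertex (nth 0 p i)); split.
  move=> i j /eqP; rewrite vertex_eq // nth_uniq ?p_size ?(leq_trans (ltn_ord _) kn) //.
  by move=> /eqP/val_inj.
move=> _ /FL/mapP[[[a b] c] abcL ->].
have /and3P[ak bk ck] := Lk _ abcL.
move: (Lp _ abcL).
rewrite mem_filter (vertex_set_perm (permEl (perm_sort leq _))) => /andP[+ _].
congr (_ \in E); apply/setP => x.
by rewrite /tri !imsetU !imset_set1 !inE !inordK // orbA.
Qed.

End VertexNumbering.

Definition K43m_triples := [:: (0, 1, 2); (0, 1, 3); (0, 2, 3)].
Definition C5_triples := [:: (0, 1, 2); (1, 2, 3); (2, 3, 4); (0, 3, 4); (0, 1, 4)].
Definition F32_triples := [:: (0, 1, 2); (0, 3, 4); (1, 3, 4); (2, 3, 4)].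

Lemma K43m_sub :
  {subset K43m <= [seq tri (inord t.1.1) (inord t.1.2) (inord t.2) | t <- K43m_triples]}.
Proof. by move=> e; rewrite !inE -!orbA. Qed.

Lemma C5_sub :
  {subset C5 <= [seq tri (inord t.1.1) (inord t.1.2) (inord t.2) | t <- C5_triples]}.
Proof. by move=> e; rewrite !inE -!orbA. Qed.

Lemma F32_sub :
  {subset F32 <= [seq tri (inord t.1.1) (inord t.1.2) (inord t.2) | t <- F32_triples]}.
Proof. by move=> e; rewrite !inE -!orbA. Qed.

Lemma complete_shadow_5_embeds_pattern :
  all (fun s => [|| embeds 5 K43m_triples s, embeds 5 C5_triples s | embeds 5 F32_triples s])
    [seq s <- subseqs (triples 5) | shadow_completeb 5 s].
Proof. by vm_compute. Qed.

Theorem lemma2p13 :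
  ~ exists (T : finType) (E : {set {set T}}),
      #|T| = 5 /\ is_3graph E /\ free K43m E /\ free C5 E /\ free F32 E /\
      shadow_complete E.
Proof.
move=> [T [E [T5 [E3 [freeK [freeC [freeF shE]]]]]]].
have /card_gt0P[x0 _] : 0 < #|T| by rewrite T5.
have := allP complete_shadow_5_embeds_pattern (index_graph x0 5 E).
rewrite mem_filter (shadow_completeb_index_graph x0 T5) // index_graph_in_subseqs.
case/(_ isT)/or3P => embeds_pattern.
- by apply: freeK; apply: (contains_of_embeds T5 _ _ K43m_sub embeds_pattern).
- by apply: freeC; apply: (contains_of_embeds T5 _ _ C5_sub embeds_pattern).
- by apply: freeF; apply: (contains_of_embeds T5 _ _ F32_sub embeds_pattern).
Qed.
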